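(* Let $T$ be a complete first-order theory, and let $T'$ be its continuous logic counterpart (i.e., $T$ and $T'$ have the same models, first-order formulas being regarded as $\{0,1\}$-valued continuous formulas). Let $\mathcal{I}$ be a structure in a first-order language $\mathcal{L}'$. Then $\mathcal{I}$-indexed indiscernibles have the continuous modeling property in $T'$ if and only if $\mathcal{I}$-indexed indiscernibles have the (classical) modeling property in $T$.
   Context: Let $\mathcal{L}'$ be a first-order language and $\mathcal{I}$ an $\mathcal{L}'$-structure. Work in a monster model $\mathfrak{C}$ (a $\kappa$-saturated, strongly $\kappa$-homogeneous model for a strong limit cardinal $\kappa > |T|$). An $\mathcal{I}$-indexed sequence $(b_i)_{i\in\mathcal{I}}$ is $\mathcal{I}$-indiscernible if for all finite tuples $\bar i,\bar j$ from $\mathcal{I}$, $\mathrm{qftp}(\bar i)=\mathrm{qftp}(\bar j)$ implies $\mathrm{tp}(b_{\bar i})=\mathrm{tp}(b_{\bar j})$. Given an $\mathcal{I}$-indexed sequence $\mathbf{I}=(a_i)_{i\in\mathcal{I}}$, a sequence $(b_j)_{j\in\mathcal{I}}$ is locally based on $\mathbf{I}$ in the continuous sense if for every finite set $\Delta$ of formulas, every finite tuple $\bar j\subseteq\mathcal{I}$ and every $\varepsilon>0$ there is $\bar i\subseteq\mathcal{I}$ with $\mathrm{qftp}(\bar i)=\mathrm{qftp}(\bar j)$ and $|\varphi(b_{\bar j})-\varphi(a_{\bar i})|\le\varepsilon$ for all $\varphi\in\Delta$; it is locally based on $\mathbf{I}$ in the classical sense if instead one requires $\mathrm{tp}^{\Delta}(b_{\bar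 j})=\mathrm{tp}^{\Delta}(a_{\bar i})$. $\mathcal{I}$-indexed indiscernibles have the continuous modeling property in a continuous theory if for every $\mathcal{I}$-indexed sequence $\mathbf{I}$ in the monster model there is an $\mathcal{I}$-indiscernible sequence locally based on $\mathbf{I}$ in the continuous sense; they have the (classical) modeling property in a first-order theory if the same holds with ''locally based'' in the classical sense. *)

From mathcomp Require Import all_boot all_algebra.
From mathcomp Require Import classical_sets boolp cardinality reals Rstruct.
From Stdlib Require List.

Set Implicit Arguments.
Unset Strict Implicit.
Unset Printing Implicit Defensive.
Import GRing.Theory Num.Theory.

Local Open Scope classical_set_scope.
Local Open Scope ring_scope.

Definition RR := Rdefinitions.R.

Record language := Language {
  func : Type;
  rel : Type;
  farity : func -> nat;
  rarity : rel -> nat }.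

Section Syntax.
Variable L : language.

Inductive term (n : nat) : Type :=
| tvar : 'I_n -> term n
| tfun (f : func L) : ('I_(farity f) -> term n) -> term n.

(* first-order formulas with free variables among x_0, ..., x_{n-1};
   quantifiers bind the new variable x_0 of a formula with n.+1 variables
   (the old variables being shifted by one) *)
Inductive formula : nat -> Type :=
| fbot n : formula n
| ftop n : formula n
| feq n : term n -> term n -> formula n
| frel n (R : rel L) : ('I_(rarity R) -> term n) -> formula n
| fnot n : formula n -> formula n
| fand n : formula n -> formula n -> formula n
| for_ n : formula n -> formula n -> formula n
| fimp n : formula n -> formula n -> formula n
| fex n : formula n.+1 -> formula n
| fall n : formula n.+1 -> formula n.

Definition sentence := formula 0.

Fixpoint qfree n (phi : formula n) : Prop :=
  match phi with
  | fex _ _ | fall _ _ => False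
  | fnot _ p => qfree p
  | fand _ p q | for_ _ p q | fimp _ p q => qfree p /\ qfree q
  | _ => True
  end.

(* (two-valued) continuous formulas of the continuous counterpart:
   atomic formulas are the {0,1}-valued relations and the discrete metric,
   connectives are arbitrary continuous functions [0,1]^k -> [0,1],
   quantifiers are sup and inf. *)
Definition unit_cube k (x : 'I_k -> RR) := forall i, 0 <= x i <= 1.

Definition connective k (u : ('I_k -> RR) -> RR) : Prop :=
  (forall x, unit_cube x -> 0 <= u x <= 1) /\
  (forall x, unit_cube x -> forall eps : RR, 0 < eps ->
     exists2 delta : RR, 0 < delta &
       forall y, unit_cube y -> (forall i, `|x i - y i| < delta) ->
         `|u x - u y| < eps).

Inductive cformula : nat -> Type :=
| cdist n : term n -> term n -> cformula n
| crel n (R : rel L) : ('I_(rarity R) -> term n) -> cformula n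
| cconn n k (u : ('I_k -> RR) -> RR) :
    connective u -> ('I_k -> cformula n) -> cformula n
| csup n : cformula n.+1 -> cformula n
| cinf n : cformula n.+1 -> cformula n.

End Syntax.

Record structure (L : language) := Structure {
  carrier :> Type;
  carrier_nonempty : inhabited carrier;
  interp_fun : forall f : func L, ('I_(farity f) -> carrier) -> carrier;
  interp_rel : forall R : rel L, ('I_(rarity R) -> carrier) -> Prop }.

Section Semantics.
Variables (L : language) (M : structure L).

Definition scons n (x : M) (e : 'I_n -> M) : 'I_n.+1 -> M :=
  fun i => if unlift ord0 i is Some j then e j else x.

Fixpoint teval n (e : 'I_n -> M) (t : term L n) : M :=
  match t with
  | tvar v => e v
  | tfun f ts => @interp_fun L M f (fun j => teval e (ts j))
  end.

Fixpoint sat n (phi : formula L n) : ('I_n -> M) -> Prop :=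
  match phi in formula _ n return ('I_n -> M) -> Prop with
  | fbot _ => fun _ => False
  | ftop _ => fun _ => True
  | feq _ t1 t2 => fun e => teval e t1 = teval e t2
  | frel _ R ts => fun e => @interp_rel L M R (fun j => teval e (ts j))
  | fnot _ p => fun e => ~ sat p e
  | fand _ p q => fun e => sat p e /\ sat q e
  | for_ _ p q => fun e => sat p e \/ sat q e
  | fimp _ p q => fun e => sat p e -> sat q e
  | fex _ p => fun e => exists x : M, sat p (scons x e)
  | fall _ p => fun e => forall x : M, sat p (scons x e)
  end.

(* continuous semantics; convention: 0 = true, 1 = false *)
Definition truth_value (P : Prop) : RR := if pselect P then 0 else 1.

Fixpoint cval n (phi : cformula L n) : ('I_n -> M) -> RR :=
  match phi in cformula _ n return ('I_n -> M) -> RR with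
  | cdist _ t1 t2 => fun e => truth_value (teval e t1 = teval e t2)
  | crel _ R ts => fun e => truth_value (@interp_rel L M R (fun j => teval e (ts j)))
  | cconn _ k u _ args => fun e => u (fun i => cval (args i) e)
  | csup _ p => fun e => sup [set cval p (scons x e) | x in [set: M]]
  | cinf _ p => fun e => inf [set cval p (scons x e) | x in [set: M]]
  end.

Lemma ord0_empty (i : 'I_0) : False. Proof. by case: i. Qed.

Definition empty_env : 'I_0 -> M := fun i => False_rect M (ord0_empty i).

Definition models (T : set (sentence L)) : Prop :=
  forall phi, T phi -> sat phi empty_env.

End Semantics.


Definition complete_theory (L : language) (T : set (sentence L)) : Prop :=
  (exists M : structure L, models M T) /\
  forall phi : sentence L,
    (forall M : structure L, models M T -> sat phi (empty_env M)) \/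
    (forall M : structure L, models M T -> sat (fnot phi) (empty_env M)).

Local Open Scope card_scope.

Definition card_lt T U (A : set T) (B : set U) : Prop :=
  A #<= B /\ ~ (B #<= A).

(* the cardinal kappa is represented by the type K (kappa = |K|) *)
Definition strong_limit (K : Type) : Prop :=
  forall (U : Type) (X : set U), card_lt X [set: K] ->
    card_lt [set Y : set U | Y `<=` X] [set: K].

Section Monster.
Variables (L : language) (M : structure L).

Record pformula (n : nat) := PFormula {
  pf_npar : nat;
  pf_phi : formula L (n + pf_npar);
  pf_par : 'I_pf_npar -> M }.

Definition psat n (p : pformula n) (b : 'I_n -> M) : Prop :=
  sat (pf_phi p)
    (fun v => match split v with inl j => b j | inr i => @pf_par n p i end).

Definition over n (A : set M) (p : pformula n) : Prop := forall i, A (@pf_par n p i).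

Definition saturated (K : Type) : Prop :=
  forall (A : set M), card_lt A [set: K] ->
  forall n (q : set (pformula n)),
    (forall p, q p -> over A p) ->
    (forall q0, q0 `<=` q -> finite_set q0 ->
       exists b : 'I_n -> M, forall p, q0 p -> psat p b) ->
    exists b : 'I_n -> M, forall p, q p -> psat p b.

Definition automorphism (s : M -> M) : Prop :=
  bijective s /\
  (forall f args, s (@interp_fun L M f args) = @interp_fun L M f (fun j => s (args j))) /\
  (forall R args, @interp_rel L M R args <-> @interp_rel L M R (fun j => s (args j))).

Definition partial_elementary (A : set M) (f : M -> M) : Prop :=
  forall n (phi : formula L n) (a : 'I_n -> M), (forall i, A (a i)) ->
    (sat phi a <-> sat phi (fun i => f (a i))).

Definition strongly_homogeneous (K : Type) : Prop :=
  forall (A : set M) (f : M -> M), card_lt A [set: K] ->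
    partial_elementary A f ->
    exists s, automorphism s /\ forall x, A x -> s x = f x.

(* C is a monster model of T: a model of T that is kappa-saturated and
   strongly kappa-homogeneous for a strong limit cardinal kappa > |T|
   (|T| = |L| + aleph_0 = number of L-sentences). *)
Definition monster_model (T : set (sentence L)) : Prop :=
  models M T /\
  exists K : Type,
    strong_limit K /\ card_lt [set: sentence L] [set: K] /\
    saturated K /\ strongly_homogeneous K.

End Monster.

Lemma tuple_div_lt n k (v : 'I_(n * k)) : (v %/ k < n)%N.
Proof.
case: k v => [|k] v; first by case: v => m; rewrite muln0.
by rewrite ltn_divLR // ltn_ord.
Qed.

Lemma tuple_mod_lt n k (v : 'I_(n * k)) : (v %% k < k)%N.
Proof.
case: k v => [|k] v; first by case: v => m; rewrite muln0.
by rewrite ltn_mod.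
Qed.

Section Indiscernibles.
Variables (L L' : language) (C : structure L) (I : structure L') (k : nat).

Definition Iseq := I -> 'I_k -> C.

Definition qftp_eq n (i j : 'I_n -> I) : Prop :=
  forall phi : formula L' n, qfree phi -> (sat phi i <-> sat phi j).

(* the concatenated tuple b_{i_0} ... b_{i_{n-1}} (of length n * k):
   its coordinate number j * k + l is the l-th coordinate of b_{i_j} *)
Definition subtuple (b : Iseq) n (i : 'I_n -> I) : 'I_(n * k) -> C :=
  fun v => b (i (Ordinal (tuple_div_lt v))) (Ordinal (tuple_mod_lt v)).

Definition tp_eq (b a : Iseq) n (j i : 'I_n -> I) : Prop :=
  forall phi : formula L (n * k),
    sat phi (subtuple b j) <-> sat phi (subtuple a i).

Definition indiscernible (b : Iseq) : Prop :=
  forall n (i j : 'I_n -> I), qftp_eq i j -> tp_eq b b i j.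

Definition locally_based (b a : Iseq) : Prop :=
  forall n (Delta : list (formula L (n * k))) (j : 'I_n -> I),
  exists i : 'I_n -> I, qftp_eq i j /\
    forall phi, List.In phi Delta ->
      (sat phi (subtuple b j) <-> sat phi (subtuple a i)).

Definition locally_based_cont (b a : Iseq) : Prop :=
  forall n (Delta : list (cformula L (n * k))) (j : 'I_n -> I)
         (eps : RR), 0 < eps ->
  exists i : 'I_n -> I, qftp_eq i j /\
    forall phi, List.In phi Delta ->
      `|cval phi (subtuple b j) - cval phi (subtuple a i)| <= eps.

Definition modeling_property : Prop :=
  forall a : Iseq, exists b : Iseq, indiscernible b /\ locally_based b a.

Definition cont_modeling_property : Prop :=
  forall a : Iseq, exists b : Iseq, indiscernible b /\ locally_based_cont b a.

End Indiscernibles.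

From Pilot Require Import Defs.
From mathcomp Require Import all_boot all_algebra.
From mathcomp Require Import classical_sets boolp cardinality reals Rstruct.
From mathcomp Require Import topology normedtype matrix_normedtype Rstruct_topology.
From mathcomp Require Import lra.
Import order.Order.TTheory GRing.Theory Num.Theory.
Set Implicit Arguments.
Unset Strict Implicit.
Unset Printing Implicit Defensive.
Local Open Scope classical_set_scope.
Local Open Scope ring_scope.

(** A first-order formula is a {0,1}-valued continuous formula (max for
   conjunction, 1 - x for negation, inf/sup for the quantifiers), so
   continuous closeness below 1 is classical agreement: continuous local
   basedness implies classical local basedness.  Conversely, every continuous
   formula is determined up to eps by the truth values of finitely many
   first-order formulas: for a connective by uniform continuity on the unit
   cube, and for sup/inf over x because agreement of two tuples on the
   sentences "exists x, c" for the Boolean cells c of Phi lets every witness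
   on one side be matched, with the same Phi-type, on the other side.
   Classical local basedness for these finitely many formulas then yields the
   continuous one. *)

Lemma compact_unif_cont (R : realType) (X : pseudoMetricType R) (K : set X)
    (f : X -> R) :
  compact K ->
  (forall x, K x -> forall eps, 0 < eps ->
     exists2 d, 0 < d & forall y, K y -> ball x d y -> `|f x - f y| < eps) ->
  forall eps, 0 < eps ->
  exists2 d, 0 < d & forall x y, K x -> K y -> ball x d y -> `|f x - f y| < eps.
Proof.
move=> cK fc eps eps0; have eps20 : 0 < eps / 2 by rewrite divr_gt0.
have /choice[d dP] x : exists d, 0 < d /\
    (K x -> forall y, K y -> ball x d y -> `|f x - f y| < eps / 2).
  have [Kx|nKx] := pselect (K x); last by exists 1.
  by have [d d0 dP] := fc x Kx _ eps20; exists d.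
pose P delta x := K x -> forall y, K y -> ball x delta y -> `|f x - f y| < eps.
have : \forall delta \near 0^'+, K `<=` P delta.
  apply: ((compact_near_coveringP K).1 cK _ (0^'+) P _) => x Kx.
  (* for x' near x and delta small, ball x' delta lies in ball x (d x) *)
  have [d0 dx] := dP x; have d20 : 0 < d x / 2 by rewrite divr_gt0.
  near=> x' delta => Kx' y Ky x'y.
  have xx' : ball x (d x / 2) x' by near: x'; exact: nbhsx_ballx.
  have ltd : delta < d x / 2 by near: delta; exact: nbhs_right_lt.
  have xy : ball x (d x) y.
    by rewrite (splitr (d x)); apply: ball_triangle xx' (le_ball (ltW ltd) x'y).
  have half_le : d x / 2 <= d x by lra.
  have fx'x : `|f x' - f x| < eps / 2.
    by rewrite distrC; apply: (dx Kx) => //; exact: le_ball half_le _ xx'.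
  have fxy : `|f x - f y| < eps / 2 by exact: dx.
  by rewrite (splitr eps); apply: le_lt_trans (ler_distD (f x) _ _) (ltrD fx'x fxy).
move=> /(filterI (@nbhs_right_gt _ 0)) /filter_ex[delta [d0 KP]].
by exists delta => // x y Kx Ky; exact: KP.
Unshelve. all: end_near.
Qed.

Lemma connective_unif_cont k (u : ('I_k -> RR) -> RR) : connective u ->
  forall eps, 0 < eps -> exists2 delta, 0 < delta &
    forall x y, unit_cube x -> unit_cube y ->
      (forall i, `|x i - y i| < delta) -> `|u x - u y| < eps.
Proof.
move=> [_ uc] eps eps0.
pose K := [set v : 'rV[RR]_k | unit_cube (fun i => v ord0 i)].
have cK : compact K.
  have := rV_compact (fun _ : 'I_k => @segment_compact RR 0 1).
  by congr compact; apply/funext => v; apply/propext; split=> h i;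
     have := h i; rewrite /= in_itv.
have Kc x : unit_cube x -> K (\row_i x i) by move=> cx i; rewrite mxE.
have rowK (x : 'I_k -> RR) : (fun i => (\row_i x i) ord0 i) = x.
  by apply/funext => i; rewrite mxE.
pose f (v : 'rV[RR]_k) := u (fun i => v ord0 i).
have [|delta d0 hd] := compact_unif_cont (f := f) cK _ eps0.
  move=> v Kv e e0; have [d d0 hd] := uc _ Kv _ e0.
  by exists d => // w Kw [_ vw]; apply: hd => // i; exact: vw.
exists delta => // x y cx cy xy.
rewrite -(rowK x) -(rowK y); apply: hd; [exact: Kc|exact: Kc|split=> // i j].
by rewrite ord1 !mxE; exact: xy.
Qed.

Section RangeSupInf.
Variable R : realType.

Lemma sup_range_le_add (A B : Type) (f : A -> R) (g : B -> R) eps :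
  inhabited A -> has_ubound (range g) ->
  (forall a, exists b, f a <= g b + eps) -> sup (range f) <= sup (range g) + eps.
Proof.
move=> [a0] ubg fg; apply: ge_sup => [|_ [a _ <-]]; first by exists (f a0), a0.
have [b fgb] := fg a; apply: le_trans fgb _; rewrite lerD2r.
by apply: ub_le_sup => //; exists b.
Qed.

Lemma sup_range_dist (A B : Type) (f : A -> R) (g : B -> R) M eps :
  inhabited A -> inhabited B -> (forall a, f a <= M) -> (forall b, g b <= M) ->
  (forall a, exists b, `|f a - g b| <= eps) ->
  (forall b, exists a, `|f a - g b| <= eps) ->
  `|sup (range f) - sup (range g)| <= eps.
Proof.
move=> iA iB fM gM fg gf; rewrite ler_distl lerBlDr; apply/andP; split.
  apply: sup_range_le_add => [//||b]; first by exists M => _ [a _ <-].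
  by have [a /ler_distlCDr] := gf b; exists a.
apply: sup_range_le_add => [//||a]; first by exists M => _ [b _ <-].
by have [b /ler_distlDr] := fg a; exists b.
Qed.

Lemma inf_range_dist (A B : Type) (f : A -> R) (g : B -> R) m eps :
  inhabited A -> inhabited B -> (forall a, m <= f a) -> (forall b, m <= g b) ->
  (forall a, exists b, `|f a - g b| <= eps) ->
  (forall b, exists a, `|f a - g b| <= eps) ->
  `|inf (range f) - inf (range g)| <= eps.
Proof.
have distNN (x y : R) : `|- x - - y| = `|x - y| by rewrite -opprD normrN.
move=> iA iB mf mg fg gf; rewrite /inf !image_comp distNN.
apply: (sup_range_dist (M := - m)) => // [a|b|a|b]; rewrite /= ?lerN2 //.
  by have [b] := fg a; exists b; rewrite distNN.
by have [a] := gf b; exists a; rewrite distNN.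
Qed.

Lemma sup_range_itv (A : Type) (f : A -> R) m M :
  inhabited A -> (forall a, m <= f a <= M) -> m <= sup (range f) <= M.
Proof.
move=> [a0] fmM; have /andP[ma0 _] := fmM a0; apply/andP; split.
  apply: le_trans ma0 (ub_le_sup _ _); last by exists a0.
  by exists M => _ [a _ <-]; case/andP: (fmM a).
by apply: ge_sup => [|_ [a _ <-]]; [exists (f a0), a0|case/andP: (fmM a)].
Qed.

Lemma inf_range_itv (A : Type) (f : A -> R) m M :
  inhabited A -> (forall a, m <= f a <= M) -> m <= inf (range f) <= M.
Proof.
move=> iA fmM; rewrite /inf image_comp lerNr lerNl andbC.
by apply: sup_range_itv => // a /=; rewrite lerN2 lerN2 andbC.
Qed.

End RangeSupInf.

Lemma truth_value_itv (P : Prop) : 0 <= truth_value P <= 1.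
Proof. by rewrite /truth_value; case: pselect => ?; rewrite lexx ler01. Qed.

Lemma truth_value_le (P Q : Prop) : (Q -> P) -> truth_value P <= truth_value Q.
Proof.
rewrite /truth_value => QP; case: pselect => p; case: pselect => q;
  rewrite ?lexx ?ler01 //.
by case: p; exact: QP.
Qed.

Lemma truth_value_dist_lt1 (P Q : Prop) :
  `|truth_value P - truth_value Q| < 1 -> (P <-> Q).
Proof.
rewrite /truth_value; do 2 case: pselect => //=.
- by rewrite sub0r normrN normr1 ltxx.
- by rewrite subr0 normr1 ltxx.
Qed.

Lemma truth_valueN (P : Prop) : 1 - truth_value P = truth_value (~ P).
Proof.
by rewrite /truth_value; case: pselect => p; case: pselect => q;
  rewrite ?subr0 ?subrr //; tauto.
Qed.

Lemma truth_value_max (P Q : Prop) :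
  Num.max (truth_value P) (truth_value Q) = truth_value (P /\ Q).
Proof.
rewrite /truth_value; case: pselect => pq; case: pselect => p;
  case: pselect => q /=; try tauto; rewrite ?maxxx //.
  exact/max_idPr/ler01.
exact/max_idPl/ler01.
Qed.

Lemma sup_truth_value (A : Type) (P : A -> Prop) : inhabited A ->
  sup (range (fun x => truth_value (P x))) = truth_value (forall x, P x).
Proof.
move=> [a0]; apply/le_anti/andP; split.
  apply: ge_sup => [|_ [x _ <-]]; first by exists (truth_value (P a0)), a0.
  by apply: truth_value_le => allP; exact: allP.
have [x Px_all] : exists x, P x -> forall y, P y. (* drinker's principle *)
  have [allP|/existsNP[x nPx]] := pselect (forall y, P y); first by exists a0.
  by exists x.
apply: le_trans (truth_value_le Px_all) (ub_le_sup _ _); last by exists x.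
by exists 1 => _ [y _ <-]; case/andP: (truth_value_itv (P y)).
Qed.

Lemma inf_truth_value (A : Type) (P : A -> Prop) : inhabited A ->
  inf (range (fun x => truth_value (P x))) = truth_value (exists x, P x).
Proof.
move=> [a0]; apply/le_anti/andP; split; last first.
  apply: lb_le_inf => [|_ [x _ <-]]; first by exists (truth_value (P a0)), a0.
  by apply: truth_value_le => Px; exists x.
have [x exP_x] : exists x, (exists y, P y) -> P x.
  have [[x Px]|nexP] := pselect (exists y, P y); first by exists x.
  by exists a0.
apply: le_trans (ge_inf _ _) (truth_value_le exP_x); last by exists x.
by exists 0 => _ [y _ <-]; case/andP: (truth_value_itv (P y)).
Qed.

Lemma nonexpansive_connective k (u : ('I_k -> RR) -> RR) :
  (forall x, unit_cube x -> 0 <= u x <= 1) ->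
  (forall x y d, 0 < d -> (forall i, `|x i - y i| < d) -> `|u x - u y| < d) ->
  connective u.
Proof.
by move=> u01 ulip; split=> // x _ eps eps0; exists eps => // y _; exact: ulip.
Qed.

Lemma const_connective (c : RR) :
  0 <= c <= 1 -> connective (fun _ : 'I_0 -> RR => c).
Proof.
by move=> c01; apply: nonexpansive_connective => // x y d d0 _; rewrite subrr normr0.
Qed.

Lemma neg_connective : connective (fun x : 'I_1 -> RR => 1 - x ord0).
Proof.
apply: nonexpansive_connective => [x /(_ ord0)/andP[x0 x1]|x y d _ /(_ ord0)].
  by rewrite subr_ge0 x1 lerBlDr lerDl.
by rewrite !ltr_norml => /andP[? ?]; apply/andP; split; lra.
Qed.

Lemma max_connective :
  connective (fun x : 'I_2 -> RR => Num.max (x ord0) (x ord_max)).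
Proof.
apply: nonexpansive_connective => [x cx|x y d _ xy].
  by rewrite ge_max !le_max; case/andP: (cx ord0) => -> ->; case/andP: (cx ord_max).
move: (xy ord0) (xy ord_max); rewrite !ltr_norml => /andP[? ?] /andP[? ?].
by case: (lerP (x ord0)) => ?; case: (lerP (y ord0)) => ?; apply/andP; split; lra.
Qed.

Section Translation.
Variable L : language.

Definition cconst n (P : Prop) : cformula L n :=
  cconn (const_connective (truth_value_itv P)) (fun i => False_rect _ (ord0_empty i)).

Definition cneg n (p : cformula L n) : cformula L n :=
  cconn neg_connective (fun _ => p).

Definition cmax n (p q : cformula L n) : cformula L n :=
  cconn max_connective (fun i => if i == ord0 then p else q).

Fixpoint cformula_of n (phi : formula L n) : cformula L n :=
  match phi with
  | fbot n => cconst n False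
  | ftop n => cconst n True
  | feq _ t1 t2 => cdist t1 t2
  | Defs.frel _ R ts => @crel L _ R ts
  | fnot _ p => cneg (cformula_of p)
  | fand _ p q => cmax (cformula_of p) (cformula_of q)
  | for_ _ p q => cneg (cmax (cneg (cformula_of p)) (cneg (cformula_of q)))
  | fimp _ p q => cneg (cmax (cformula_of p) (cneg (cformula_of q)))
  | fex _ p => cinf (cformula_of p)
  | fall _ p => csup (cformula_of p)
  end.

Lemma cval_cformula_of (C : structure L) n (phi : formula L n) (e : 'I_n -> C) :
  cval (cformula_of phi) e = truth_value (sat phi e).
Proof.
elim: phi e => //= {n} n.
- by move=> p IH e; rewrite IH truth_valueN.
- by move=> p IHp q IHq e; rewrite IHp IHq truth_value_max.
- move=> p IHp q IHq e; rewrite IHp IHq !truth_valueN truth_value_max truth_valueN.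
  by congr truth_value; apply/propext; case: (pselect (sat p e)); tauto.
- move=> p IHp q IHq e; rewrite IHp IHq !truth_valueN truth_value_max truth_valueN.
  by congr truth_value; apply/propext; case: (pselect (sat q e)); tauto.
- move=> p IH e; rewrite (funext (fun x => IH (scons x e))).
  exact/inf_truth_value/carrier_nonempty.
- move=> p IH e; rewrite (funext (fun x => IH (scons x e))).
  exact/sup_truth_value/carrier_nonempty.
Qed.

End Translation.

Lemma In_enum (T : finType) (x : T) : List.In x (enum T).
Proof.
have : x \in enum T by rewrite mem_enum.
by elim: (enum T) => //= y s IH; rewrite inE => /orP[/eqP->|/IH]; [left|right].
Qed.

Section Approximation.
Variables (L : language) (C : structure L).

Lemma cval_itv n (phi : cformula L n) (e : 'I_n -> C) : 0 <= cval phi e <= 1.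
Proof.
have nC := carrier_nonempty C.
elim: phi e => /= {n} [n t1 t2|n R ts|n k u [u01 _] args IH|n p IH|n p IH] e.
- exact: truth_value_itv.
- exact: truth_value_itv.
- by apply: u01 => i; exact: IH.
- exact: sup_range_itv.
- exact: inf_range_itv.
Qed.

Definition agree n (Phi : list (formula L n)) (e e' : 'I_n -> C) :=
  forall psi, List.In psi Phi -> (sat psi e <-> sat psi e').

Lemma agree_sym n (Phi : list (formula L n)) (e e' : 'I_n -> C) :
  agree Phi e e' -> agree Phi e' e.
Proof. by move=> ee' psi /ee'[]; split. Qed.

Lemma agree_flat_map (A : Type) n (Ph : A -> list (formula L n)) s a
    (e e' : 'I_n -> C) :
  List.In a s -> agree (List.flat_map Ph s) e e' -> agree (Ph a) e e'.
Proof. by move=> sa ee' psi psiPh; apply: ee'; apply/List.in_flat_map; exists a. Qed.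

(* the atoms of the Boolean algebra generated by Phi *)
Fixpoint cells n (Phi : list (formula L n)) : list (formula L n) :=
  match Phi with
  | nil => [:: ftop L n]
  | cons psi Phi' =>
      List.flat_map (fun rho => [:: fand psi rho; fand (fnot psi) rho]) (cells Phi')
  end.

Lemma cells_cover n (Phi : list (formula L n)) (e : 'I_n -> C) :
  exists2 rho, List.In rho (cells Phi) & sat rho e.
Proof.
elim: Phi => [|psi Phi [rho rhoPhi rho_e]] /=; first by exists (ftop L n); [left|].
have [psi_e|npsi_e] := pselect (sat psi e).
  by exists (fand psi rho) => //; apply/List.in_flat_map; exists rho; split; [|left].
exists (fand (fnot psi) rho) => //; apply/List.in_flat_map; exists rho.
by split; [|right; left].
Qed.

Lemma cells_agree n (Phi : list (formula L n)) rho (e e' : 'I_n -> C) :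
  List.In rho (cells Phi) -> sat rho e -> sat rho e' -> agree Phi e e'.
Proof.
elim: Phi rho => [|psi Phi IH] rho /=; first by move=> _ _ _ psi [].
move=> /List.in_flat_map[rho' [rho'Phi [<-|[<-|[]]]]] /=
  [psi_e rho'_e] [psi_e' rho'_e'] chi [<-|chiPhi];
  try exact: IH rho' rho'Phi rho'_e rho'_e' chi chiPhi.
- by split.
- by split=> [/psi_e|/psi_e'].
Qed.

Definition ex_cells n (Phi : list (formula L n.+1)) : list (formula L n) :=
  List.map (@fex L n) (cells Phi).

Lemma agree_ex_cells n (Phi : list (formula L n.+1)) (e e' : 'I_n -> C) :
  agree (ex_cells Phi) e e' ->
  forall x, exists x', agree Phi (scons x e) (scons x' e').
Proof.
move=> ee' x; have [rho rhoPhi rho_xe] := cells_cover Phi (scons x e).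
have /(ee' _ (List.in_map _ _ _ rhoPhi)) [x' rho_x'e'] : sat (fex rho) e by exists x.
by exists x'; exact: cells_agree rho_xe rho_x'e'.
Qed.

Definition finitely_determined n (f : ('I_n -> C) -> RR) :=
  forall eps, 0 < eps -> exists Phi : list (formula L n),
    forall e e', agree Phi e e' -> `|f e - f e'| <= eps.

Lemma finitely_determined_common (A : Type) n (s : list A)
    (f : A -> ('I_n -> C) -> RR) eps :
  0 < eps -> (forall a, List.In a s -> finitely_determined (f a)) ->
  exists Phi : list (formula L n), forall a, List.In a s ->
    forall e e', agree Phi e e' -> `|f a e - f a e'| <= eps.
Proof.
move=> eps0 fdet.
have /choice[Ph PhP] a : exists Phi : list (formula L n), List.In a s ->
    forall e e', agree Phi e e' -> `|f a e - f a e'| <= eps.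
  have [sa|nsa] := pselect (List.In a s); last by exists nil.
  by have [Phi PhiP] := fdet a sa eps eps0; exists Phi.
by exists (List.flat_map Ph s) => a sa e e' /(agree_flat_map sa); exact: PhP.
Qed.

Lemma sat_finitely_determined n (phi : formula L n) :
  finitely_determined (fun e => truth_value (sat phi e)).
Proof.
move=> eps eps0; exists [:: phi] => e e' /(_ phi (or_introl erefl))/propext->.
by rewrite subrr normr0 ltW.
Qed.

Lemma connective_finitely_determined n k (u : ('I_k -> RR) -> RR)
    (f : 'I_k -> ('I_n -> C) -> RR) :
  connective u -> (forall i e, 0 <= f i e <= 1) ->
  (forall i, finitely_determined (f i)) ->
  finitely_determined (fun e => u (fun i => f i e)).
Proof.
move=> hu f01 fdet eps eps0.
have [delta d0 u_unif] := connective_unif_cont hu eps0.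
have d20 : 0 < delta / 2 by rewrite divr_gt0.
have [Phi PhiP] :=
  finitely_determined_common (s := enum 'I_k) d20 (fun i _ => fdet i).
exists Phi => e e' ee'; apply/ltW/u_unif => [i|i|i]; rewrite ?f01 //.
by apply: le_lt_trans (PhiP i (In_enum i) e e' ee') _; lra.
Qed.

Lemma finitely_determined_back_forth n (f : ('I_n.+1 -> C) -> RR) Phi eps :
  (forall e e', agree Phi e e' -> `|f e - f e'| <= eps) ->
  forall e e', agree (ex_cells Phi) e e' ->
  (forall x, exists x', `|f (scons x e) - f (scons x' e')| <= eps) /\
  (forall x', exists x, `|f (scons x e) - f (scons x' e')| <= eps).
Proof.
move=> PhiP e e' ee'; split=> [x|x'].
  by have [x' xx'] := agree_ex_cells ee' x; exists x'; exact: PhiP.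
have [x x'x] := agree_ex_cells (agree_sym ee') x'.
by exists x; rewrite distrC; exact: PhiP.
Qed.

Lemma sup_finitely_determined n (f : ('I_n.+1 -> C) -> RR) :
  (forall e, f e <= 1) -> finitely_determined f ->
  finitely_determined (fun e => sup (range (fun x => f (scons x e)))).
Proof.
move=> f1 fdet eps eps0; have [Phi PhiP] := fdet eps eps0.
exists (ex_cells Phi) => e e' ee'.
have [xx' x'x] := finitely_determined_back_forth PhiP ee'.
by apply: (sup_range_dist (M := 1)) => //; exact: carrier_nonempty.
Qed.

Lemma inf_finitely_determined n (f : ('I_n.+1 -> C) -> RR) :
  (forall e, 0 <= f e) -> finitely_determined f ->
  finitely_determined (fun e => inf (range (fun x => f (scons x e)))).
Proof.
move=> f0 fdet eps eps0; have [Phi PhiP] := fdet eps eps0.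
exists (ex_cells Phi) => e e' ee'.
have [xx' x'x] := finitely_determined_back_forth PhiP ee'.
by apply: (inf_range_dist (m := 0)) => //; exact: carrier_nonempty.
Qed.

Lemma cval_finitely_determined n (phi : cformula L n) :
  finitely_determined (cval phi).
Proof.
elim: phi => {n} [n t1 t2|n R ts|n k u hu args IH|n p IH|n p IH].
- exact: (sat_finitely_determined (feq t1 t2)).
- exact: (sat_finitely_determined (Defs.frel ts)).
- by apply: connective_finitely_determined => // i e; exact: cval_itv.
- by apply: sup_finitely_determined => // e; case/andP: (cval_itv p e).
- by apply: inf_finitely_determined => // e; case/andP: (cval_itv p e).
Qed.

End Approximation.

Theorem proposition3p5 (L : language) (T : set (sentence L))
  (hT : complete_theory T) (C : structure L) (hC : monster_model C T)
  (L' : language) (I : structure L') (k : nat) :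
  cont_modeling_property C I k <-> modeling_property C I k.
Proof.
split=> [cmp a|mp a].
- have [b [b_ind b_based]] := cmp a; exists b; split=> // n Delta j.
  have half_gt0 : (0 : RR) < 1 / 2 by lra.
  have [i [ij close]] := b_based n (List.map (@cformula_of L _) Delta) j _ half_gt0.
  exists i; split=> // phi phiD; apply: truth_value_dist_lt1.
  rewrite -!cval_cformula_of.
  by apply: le_lt_trans (close _ (List.in_map _ _ _ phiD)) _; lra.
- have [b [b_ind b_based]] := mp a; exists b; split=> // n Delta j eps eps0.
  have [Phi PhiP] := finitely_determined_common eps0
    (fun phi (_ : List.In phi Delta) => cval_finitely_determined C phi).
  have [i [ij agree_ji]] := b_based n Phi j.
  by exists i; split=> // phi phiD; exact: PhiP.
Qed.
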